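(* Let $(X,\mathcal{R})$ be an association scheme with rank $d+1\geq 4$, and let $\Gamma$ be the connected scheme graph of a relation $R_1\in\mathcal{R}$. Let $x,z\in X$ with $(x,z)\in R_a$ for some relation $R_a$ and $\mathrm{dist}_\Gamma(x,z)=i\geq 2$. Assume there exist two distinct neighbors $z_3,z_4$ of $z$ in $\Gamma$ and two distinct relations $R_b,R_c\in\mathcal{R}$ such that $(x,z_3)\in R_b$, $(x,z_4)\in R_c$, $\mathrm{dist}_\Gamma(x,z_3)=\mathrm{dist}_\Gamma(x,z_4)=i+1$, and $c_{i+1}(x,z_3)=1$. Then there exists a relation $R_e\in\mathcal{R}$ such that $p^1_{be}\neq 0$, $p^1_{ce}\neq 0$, and no pair in $R_e$ is at distance $i$ in $\Gamma$.
   Context: A (symmetric) association scheme with rank $d+1$ on a finite set $X$ is a partition $\mathcal{R}=\{R_0,\dots,R_d\}$ of $X\times X$ with $R_0$ the diagonal, each $R_i$ symmetric, and numbers $p^h_{ij}$ such that for every $(x,y)\in R_h$ the number of $z$ with $(x,z)\in R_i$, $(z,y)\in R_j$ equals $p^h_{ij}$. The scheme graph of $R_1$ is the graph on $X$ with $x\sim y$ iff $(x,y)\in R_1$. For vertices $x,y$ at distance $j$ in $\Gamma$, $c_j(x,y)$ denotes the number of neighbors of $y$ at distance $j-1$ from $x$. *)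

From mathcomp Require Import all_boot.
Set Implicit Arguments. Unset Strict Implicit. Unset Printing Implicit Defensive.

(* A symmetric association scheme of rank d+1 on a finite set X:
   R x y = i  means (x,y) \in R_i; p h i j are the intersection numbers p^h_{ij}. *)
Definition is_assoc_scheme (X : finType) (d : nat) (R : X -> X -> 'I_d.+1)
    (p : 'I_d.+1 -> 'I_d.+1 -> 'I_d.+1 -> nat) : Prop :=
  [/\ (forall x y, R x y = ord0 <-> x = y),
      (forall x y, R x y = R y x),
      (forall i : 'I_d.+1, exists x y, R x y = i)
    & (forall (h i j : 'I_d.+1) x y, R x y = h ->
         #|[set z | (R x z == i) && (R z y == j)]| = p h i j)].

Definition sadj (X : finType) (d : nat) (R : X -> X -> 'I_d.+1) (r1 : 'I_d.+1) : rel X :=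
  fun x y => R x y == r1.

Fixpoint reach (X : finType) (g : rel X) (k : nat) (x y : X) : bool :=
  if k is k'.+1 then reach g k' x y || [exists w, reach g k' x w && g w y]
  else x == y.

(* Graph distance: least k with a walk of length <= k (for connected graphs
   on X this is < #|X|; value #|X|.+1 if y is unreachable). *)
Definition gdist (X : finType) (g : rel X) (x y : X) : nat :=
  find (fun k => reach g k x y) (iota 0 #|X|.+1).

Definition gconnected (X : finType) (g : rel X) : Prop :=
  forall x y : X, connect g x y.

Definition cnum (X : finType) (g : rel X) (j : nat) (x y : X) : nat :=
  #|[set w | g y w & gdist g x w == j.-1]|.

From mathcomp Require Import all_boot.
Set Implicit Arguments. Unset Strict Implicit. Unset Printing Implicit Defensive.

(* Distances and the numbers c_j only depend on the relation of the scheme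
   containing a pair, since walks can be counted with intersection numbers.
   Hence c_{i+1}(z3, x) = 1 as well, so x has a unique neighbour v at distance
   i from z3; it lies on a geodesic from z to x and satisfies (z3, v) in R_a.
   Transporting z4 along (x, z) -> (v, z3) gives a neighbour u of z3 with
   (v, u) in R_c, hence d(v, u) = i + 1 and u <> z.  Then e := R(x, u) has
   p^1_{be}, p^1_{ce} <> 0 (triangles z3 u x and v x u), and d(x, u) <> i
   because z is the only neighbour of z3 at distance i from x. *)

Section Distance.
Variables (X : finType) (g : rel X).

Lemma reach_step k u w v : reach g k u w -> g w v -> reach g k.+1 u v.
Proof. by move=> ruw gwv /=; apply/orP; right; apply/existsP; exists w; rewrite ruw. Qed.

Lemma gdist_leq_card u v : gdist g u v <= #|X|.+1.
Proof. by have := find_size (fun k => reach g k u v) (iota 0 #|X|.+1); rewrite size_iota. Qed.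

Lemma reach_gdist u v : gdist g u v <= #|X| -> reach g (gdist g u v) u v.
Proof.
move=> le_card.
have has_reach : has (fun k => reach g k u v) (iota 0 #|X|.+1).
  by rewrite has_find size_iota.
by have := nth_find 0 has_reach; rewrite nth_iota ?add0n.
Qed.

Lemma reach_lt_gdist j u v : j < gdist g u v -> reach g j u v = false.
Proof.
move=> lt_j; have := before_find 0 lt_j.
by rewrite nth_iota // (leq_trans lt_j (gdist_leq_card u v)).
Qed.

Lemma gdist_leq_reach k u v : reach g k u v -> k <= #|X| -> gdist g u v <= k.
Proof.
move=> ruv le_k; rewrite leqNgt; apply/negP => /reach_lt_gdist.
by rewrite ruv.
Qed.

Lemma gdist_step u w v : gdist g u w < #|X| -> g w v -> gdist g u v <= (gdist g u w).+1.
Proof.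
move=> lt_card gwv; have ruw := reach_gdist (ltnW lt_card).
exact: gdist_leq_reach (reach_step ruw gwv) lt_card.
Qed.

Lemma gdist_pred u v k :
  gdist g u v = k.+1 -> k < #|X| -> exists2 w, g w v & gdist g u w = k.
Proof.
move=> duv lt_k; have := reach_gdist (u := u) (v := v); rewrite duv => /(_ lt_k) /=.
rewrite reach_lt_gdist ?duv //= => /existsP [w /andP [ruw gwv]].
exists w => //; apply/eqP; rewrite eqn_leq gdist_leq_reach ?(ltnW lt_k) //=.
rewrite leqNgt; apply/negP => lt_w.
have := gdist_step (ltn_trans lt_w lt_k) gwv.
by rewrite duv ltnS leqNgt lt_w.
Qed.

Lemma cnum1_eq j u v w w' :
  cnum g j u v = 1 -> g v w -> g v w' ->
  gdist g u w = j.-1 -> gdist g u w' = j.-1 -> w = w'.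
Proof.
move=> c1 vw vw' dw dw'.
have /card_le1_eqP card_le1 : #|[set y | g v y & gdist g u y == j.-1]| <= 1.
  by move: c1; rewrite /cnum => ->.
by apply: card_le1; rewrite inE ?vw ?vw' ?dw ?dw' eqxx.
Qed.

End Distance.

Section Scheme.
Variables (X : finType) (d : nat) (R : X -> X -> 'I_d.+1).
Variable p : 'I_d.+1 -> 'I_d.+1 -> 'I_d.+1 -> nat.
Hypothesis scheme : is_assoc_scheme R p.

Definition scheme_invariant (Q : X -> X -> bool) :=
  forall u v u' v', R u v = R u' v' -> Q u v = Q u' v'.

Lemma card_scheme_fibre (r : 'I_d.+1) (P : pred 'I_d.+1) u v :
  #|[set w | (R w v == r) && P (R u w)]| = \sum_(h | P h) p (R u v) h r.
Proof.
have [_ _ _ Hp] := scheme.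
rewrite -sum1_card (partition_big (fun w => R u w) P); last first.
  by move=> w; rewrite inE => /andP [].
apply: eq_bigr => h Ph; rewrite -(Hp (R u v) h r u v erefl) -sum1_card.
apply: eq_bigl => w; rewrite !inE.
case: (eqVneq (R u w) h) => [->|]; first by rewrite Ph andbT andbC.
by rewrite !andbF.
Qed.

Lemma count_invariant (Q : X -> X -> bool) (r : 'I_d.+1) u v u' v' :
  scheme_invariant Q -> R u v = R u' v' ->
  #|[set w | (R w v == r) && Q u w]| = #|[set w | (R w v' == r) && Q u' w]|.
Proof.
move=> invQ e.
pose P h := [exists a, exists b, (R a b == h) && Q a b].
have QP w0 w1 : Q w0 w1 = P (R w0 w1).
  apply/idP/existsP => [q | [a /existsP [b /andP [/eqP eab q]]]].
    by exists w0; apply/existsP; exists w1; rewrite eqxx.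
  by rewrite -(invQ _ _ _ _ eab).
have setQP a b : [set w | (R w b == r) && Q a w] = [set w | (R w b == r) && P (R a w)].
  by apply/setP => w; rewrite !inE QP.
by rewrite !setQP !card_scheme_fibre e.
Qed.

Variable r1 : 'I_d.+1.
Local Notation g := (sadj R r1).

Lemma reach_invariant k : scheme_invariant (reach g k).
Proof.
have [R0 _ _ _] := scheme.
elim: k => [|k IH] u v u' v' e /=.
  by apply/eqP/eqP => E; apply/R0; [rewrite -e | rewrite e]; apply/R0.
have step a b : [exists w, reach g k a w && g w b] =
                (0 < #|[set w | (R w b == r1) && reach g k a w]|).
  apply/existsP/card_gt0P => -[w]; rewrite ?inE andbC => Hw; exists w.
    by rewrite inE.
  exact: Hw.
by rewrite (IH _ _ _ _ e) !step (count_invariant _ IH e).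
Qed.

Lemma gdist_invariant u v u' v' : R u v = R u' v' -> gdist g u v = gdist g u' v'.
Proof. by move=> e; apply: eq_find => k; apply: reach_invariant. Qed.

Lemma gdist_sym u v : gdist g u v = gdist g v u.
Proof. by have [_ Rsym _ _] := scheme; apply: gdist_invariant. Qed.

Lemma cnum_invariant j u v u' v' : R u v = R u' v' -> cnum g j u v = cnum g j u' v'.
Proof.
have [_ Rsym _ _] := scheme; move=> e.
have cnumE a b : cnum g j a b = #|[set w | (R w b == r1) && (gdist g a w == j.-1)]|.
  by apply: eq_card => w; rewrite !inE /sadj Rsym.
have invD : scheme_invariant (fun a w => gdist g a w == j.-1).
  by move=> a b a' b' e'; rewrite (gdist_invariant e').
by rewrite !cnumE (count_invariant r1 invD e).
Qed.

Lemma intersection_number_neq0 x y w : p (R x y) (R x w) (R w y) <> 0.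
Proof.
have [_ _ _ Hp] := scheme.
rewrite -(Hp _ _ _ x y erefl); apply/eqP; rewrite -lt0n; apply/card_gt0P.
by exists w; rewrite inE !eqxx.
Qed.

Lemma triangle_transfer x y w u v :
  R x y = R u v -> exists2 w', R u w' = R x w & R w' v = R w y.
Proof.
have [_ _ _ Hp] := scheme; move=> e.
have := intersection_number_neq0 (x := x) (y := y) (w := w).
rewrite -(Hp _ _ _ u v (esym e)) => /eqP; rewrite -lt0n => /card_gt0P [w'].
by rewrite inE => /andP [/eqP ? /eqP ?]; exists w'.
Qed.

Section Configuration.
Variables (x z z3 z4 : X) (i : nat).
Hypotheses (i_gt0 : 0 < i) (zz3 : g z z3) (zz4 : g z z4).
Hypotheses (dxz : gdist g x z = i) (dxz3 : gdist g x z3 = i.+1)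
           (dxz4 : gdist g x z4 = i.+1) (c_xz3 : cnum g i.+1 x z3 = 1).

Lemma dist_le_card : i <= #|X|.
Proof. by rewrite -ltnS -dxz3 gdist_leq_card. Qed.

Lemma z_unique w : g z3 w -> gdist g x w = i -> w = z.
Proof.
have [_ Rsym _ _] := scheme; move=> z3w dxw.
by apply: cnum1_eq c_xz3 z3w _ dxw dxz; rewrite /sadj Rsym.
Qed.

Lemma geodesic_back_neighbor :
  exists2 v, g x v & R z3 v = R x z /\ gdist g z v = i.-1.
Proof.
have [_ Rsym _ _] := scheme.
have lt_card : i.-1 < #|X| by rewrite prednK ?dist_le_card.
have [y yx dzy] : exists2 y, g y x & gdist g z y = i.-1.
  by apply: gdist_pred lt_card; rewrite prednK // gdist_sym.
have dz3y : gdist g z3 y = i.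
  apply/eqP; rewrite eqn_leq; apply/andP; split.
    rewrite gdist_sym -(prednK i_gt0) -dzy (gdist_sym z y).
    by apply: gdist_step zz3; rewrite (gdist_sym y z) dzy.
  rewrite leqNgt; apply/negP => lt_i.
  have := gdist_step (leq_trans lt_i dist_le_card) yx.
  by rewrite (gdist_sym z3 x) dxz3 ltnS leqNgt lt_i.
have [v z3v vx] := triangle_transfer z (Rsym x z3).
have c_z3x : cnum g i.+1 z3 x = 1 by rewrite -c_xz3; apply: cnum_invariant.
have xv : g x v by rewrite /sadj Rsym vx.
have vy : v = y.
  apply: cnum1_eq c_z3x xv _ _ dz3y; first by rewrite /sadj Rsym.
  by rewrite (gdist_invariant z3v).
by exists v => //; split; rewrite // vy.
Qed.

Lemma exists_far_relation :
  exists e : 'I_d.+1,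
    [/\ p r1 (R x z3) e <> 0, p r1 (R x z4) e <> 0 &
        forall u v : X, R u v = e -> gdist g u v <> i].
Proof.
have [_ Rsym _ _] := scheme.
have [v xv [z3v dzv]] := geodesic_back_neighbor.
have [u vu uz3] := triangle_transfer z4 (esym (etrans (Rsym v z3) z3v)).
have z3u : R z3 u = r1 by rewrite Rsym uz3 Rsym; apply/eqP.
have u_neq_z : u != z.
  apply/eqP => uz; move: (gdist_invariant vu).
  by rewrite uz gdist_sym dzv dxz4 => /eqP; rewrite ltn_eqF // ltnS leq_pred.
exists (R x u); split.
- by move: (intersection_number_neq0 (x := z3) (y := u) (w := x)); rewrite z3u Rsym.
- by move: (intersection_number_neq0 (x := v) (y := x) (w := u)); rewrite (Rsym v x) (eqP xv) vu (Rsym u x).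
- move=> u0 v0 /gdist_invariant -> dxu; move/eqP: u_neq_z; apply.
  by apply: z_unique dxu; rewrite /sadj z3u.
Qed.

End Configuration.
End Scheme.

Theorem lemma2p4 (X : finType) (d : nat) (R : X -> X -> 'I_d.+1)
    (p : 'I_d.+1 -> 'I_d.+1 -> 'I_d.+1 -> nat) (r1 : 'I_d.+1) :
  4 <= d.+1 ->
  is_assoc_scheme R p ->
  gconnected (sadj R r1) ->
  forall (x z : X) (a : 'I_d.+1) (i : nat),
  R x z = a ->
  gdist (sadj R r1) x z = i -> 2 <= i ->
  forall (z3 z4 : X) (b c : 'I_d.+1),
  z3 != z4 -> sadj R r1 z z3 -> sadj R r1 z z4 ->
  b != c -> R x z3 = b -> R x z4 = c ->
  gdist (sadj R r1) x z3 = i.+1 -> gdist (sadj R r1) x z4 = i.+1 ->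
  cnum (sadj R r1) i.+1 x z3 = 1 ->
  exists e : 'I_d.+1,
    [/\ p r1 b e <> 0, p r1 c e <> 0 &
        forall u v : X, R u v = e -> gdist (sadj R r1) u v <> i].
Proof.
move=> _ scheme _ x z a i _ dxz i_ge2 z3 z4 b c _ zz3 zz4 _ <- <- dxz3 dxz4 c_xz3.
exact: (exists_far_relation scheme (ltnW i_ge2) zz3 zz4 dxz dxz3 dxz4 c_xz3).
Qed.
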